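(* In the setting described in the context, the service placement $X^\psi$ output by algorithm SA1 has total reward $\sum_{k\in U}f_\psi(k)w_k\ge\mathbb E\left[\sum_{k\in U}f_\tau(k)w_k\right]$, where the expectation is over the random slot allocation $\tau$.
   Context: An SPSC instance: finite sets $S$ (services), $V$ (nodes), $U$ (users); sizes $s_i>0$; capacities $c_j>0$; for each user $k$ a service $i_k\in S$, a set $T_k\subseteq V$, a reward $w_k>0$. Total reward of a placement $X=\{X_i\subseteq V\}$: $\sum_kw_k\mathbf 1[T_k\cap X_{i_k}\ne\emptyset]$. Let $\{x_{ij}\},\{y_k\}$ be an optimal solution of the LP with nonnegative variables: maximize $\sum_ky_kw_k$ s.t. $y_k\le\sum_{j\in T_k}x_{i_kj}$, $y_k\le1$; $\sum_ix_{ij}s_i\le c_j$; $x_{ij}=0$ if $s_i>c_j$; $0\le x_{ij}\le1$. Fix $\beta<1$ with $\max_is_i\le\beta\min_jc_j$; $\gamma:=1-\sqrt\beta$, $\delta:=(1-\sqrt\beta)^2$, $\mathbb N=\{1,2,\dots\}$. For $j\in V,q\in\mathbb N$: $P_j^q:=\{i:\gamma^qc_j\beta<s_i\le\gamma^{q-1}c_j\beta\}$, $d_j^q:=\sum_{i\in P_j^q}x_{ij}$, $v_j:=\delta c_j/\sum_is_ix_{ij}$, $n_j^q:=\lceil v_jd_j^q\rceil$. Slot set $\Lambda$: for every $j,q$ with $P_j^q\ne\emptyset$, $n_j^q$ slots $\sigma$ with node $\nu(\sigma)=j$, class $\kappa(\sigma)=q$. A slot allocation is $\tau:\Lambda\to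 S$ with $\tau(\sigma)\in P^{\kappa(\sigma)}_{\nu(\sigma)}$; $X^\tau_i:=\{j:\exists\sigma,\nu(\sigma)=j,\tau(\sigma)=i\}$; $f_\tau(k):=\mathbf 1[T_k\cap X^\tau_{i_k}\ne\emptyset]$. Random slot allocation: each slot $\sigma$ independently gets $\tau(\sigma)=i$ with probability $x_{i\nu(\sigma)}/d^{\kappa(\sigma)}_{\nu(\sigma)}$, $i\in P^{\kappa(\sigma)}_{\nu(\sigma)}$. A partial slot allocation is $\tau':\Lambda\to S\cup\{\emptyset\}$ with $\tau'(\sigma)\in P^{\kappa(\sigma)}_{\nu(\sigma)}\cup\{\emptyset\}$; $A(\tau')$ is the set of slot allocations agreeing with $\tau'$ wherever $\tau'(\sigma)\ne\emptyset$; $E(\tau'):=\mathbb E[\sum_kf_\tau(k)w_k\mid\tau\in A(\tau')]$. Algorithm SA1: start with $\tau'(\sigma)=\emptyset$ for all $\sigma$; process the slots one at a time; for the current slot $\sigma$ and each $i\in P^{\kappa(\sigma)}_{\nu(\sigma)}$ let $\tau'_i$ be $\tau'$ with $\sigma$ assigned $i$, choose $i'$ maximizing $E(\tau'_i)$, set $\tau'(\sigma):=i'$. When all slots are assigned let $\psi:=\tau'$ and output $X^\psi$. *)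

From mathcomp Require Import all_boot all_order all_algebra.
From mathcomp Require Import reals.
Set Implicit Arguments. Unset Strict Implicit. Unset Printing Implicit Defensive.
Import Order.TTheory GRing.Theory Num.Theory.
Local Open Scope ring_scope.

Section SPSC.
Variables (R : realType) (S V U : finType).
(* sizes, capacities, requested service, node sets and rewards of users *)
Variables (s : S -> R) (c : V -> R) (serv : U -> S) (T : U -> {set V}) (w : U -> R).

Definition LP_feasible (x : S -> V -> R) (y : U -> R) : Prop :=
  [/\ forall i j, 0 <= x i j,
      forall i j, x i j <= 1,
      forall k, 0 <= y k
    & forall k, y k <= 1] /\
   [/\ forall k, y k <= \sum_(j in T k) x (serv k) j,
      forall j, \sum_i x i j * s i <= c j
    & forall i j, c j < s i -> x i j = 0].

Definition LP_value (y : U -> R) : R := \sum_k y k * w k.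

Definition LP_optimal (x : S -> V -> R) (y : U -> R) : Prop :=
  LP_feasible x y /\
  forall x' y', LP_feasible x' y' -> LP_value y' <= LP_value y.

Variables (x : S -> V -> R) (beta : R).

Definition gamma : R := 1 - Num.sqrt beta.
Definition delta : R := (1 - Num.sqrt beta) ^+ 2.

(* P_j^q, for q >= 1 *)
Definition Pcls (j : V) (q : nat) : {set S} :=
  [set i | (gamma ^+ q * c j * beta < s i) && (s i <= gamma ^+ q.-1 * c j * beta)].

Definition dcls (j : V) (q : nat) : R := \sum_(i in Pcls j q) x i j.

Definition vnode (j : V) : R := delta * c j / (\sum_i s i * x i j).

Definition ncls (j : V) (q : nat) : nat := `|Num.ceil (vnode j * dcls j q)|%N.

Variables (L : finType) (nu : L -> V) (kappa : L -> nat).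

Definition valid_slots : Prop :=
  (forall sg, (0 < kappa sg)%N) /\
  forall j q, (0 < q)%N ->
    #|[set sg | (nu sg == j) && (kappa sg == q)]| =
      (if Pcls j q != set0 then ncls j q else 0%N).

Definition placement (tau : {ffun L -> S}) (i : S) : {set V} :=
  [set j | [exists sg, (nu sg == j) && (tau sg == i)]].

Definition total_reward (X : S -> {set V}) : R :=
  \sum_k w k * ((T k :&: X (serv k)) != set0)%:R.

Definition reward (tau : {ffun L -> S}) : R := total_reward (placement tau).

Definition slot_prob (sg : L) (i : S) : R :=
  if i \in Pcls (nu sg) (kappa sg) then x i (nu sg) / dcls (nu sg) (kappa sg) else 0.

Definition exp_random : R :=
  \sum_(tau : {ffun L -> S}) (\prod_sg slot_prob sg (tau sg)) * reward tau.

(* A partial slot allocation: None stands for the empty assignment. *)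
Definition agrees (tp : {ffun L -> option S}) (tau : {ffun L -> S}) : bool :=
  [forall sg, (tp sg == None) || (tp sg == Some (tau sg))].

(* E(tau') : expected reward when the assigned slots are fixed as in tau' and
   the unassigned slots are drawn independently as in the random allocation. *)
Definition cond_exp (tp : {ffun L -> option S}) : R :=
  \sum_(tau : {ffun L -> S} | agrees tp tau)
     (\prod_(sg | tp sg == None) slot_prob sg (tau sg)) * reward tau.

Definition restrict (psi : {ffun L -> S}) (done : seq L) : {ffun L -> option S} :=
  [ffun sg => if sg \in done then Some (psi sg) else None].

Definition assign (tp : {ffun L -> option S}) (sg : L) (i : S) : {ffun L -> option S} :=
  [ffun sg' => if sg' == sg then Some i else tp sg'].

(* psi is a possible final allocation of SA1 when the slots are processed in
   the order [ord] (with any tie-breaking among maximizers): when slot sg is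
   processed, the current partial allocation is psi restricted to the slots
   processed before it, and psi sg is a maximizer of E(tau'_i) over
   i in P_{nu sg}^{kappa sg}. *)
Definition SA1_output (ord : seq L) (psi : {ffun L -> S}) : Prop :=
  forall pre sg post, ord = pre ++ sg :: post ->
    psi sg \in Pcls (nu sg) (kappa sg) /\
    forall i, i \in Pcls (nu sg) (kappa sg) ->
      cond_exp (assign (restrict psi pre) sg i)
        <= cond_exp (assign (restrict psi pre) sg (psi sg)).

End SPSC.

From mathcomp Require Import all_boot all_order all_algebra.
From mathcomp Require Import reals.
Import Order.TTheory GRing.Theory Num.Theory.
Local Open Scope ring_scope.

(* Method of conditional expectations.  If slot sg is unassigned in tau', then
   E(tau') is the average of the E(tau'_i) weighted by the distribution of
   slot sg, so the greedy choice of SA1 never decreases E.  Along the run E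
   therefore climbs from E(empty allocation), the expected reward of the
   random allocation, to E(psi), the reward of the output. *)

Section ConditionalExpectation.
Set Implicit Arguments. Unset Strict Implicit.
Variables (R : realType) (S V U : finType)
    (s : S -> R) (c : V -> R) (serv : U -> S) (T : U -> {set V}) (w : U -> R)
    (x : S -> V -> R) (beta : R)
    (L : finType) (nu : L -> V) (kappa : L -> nat).

Local Notation p := (slot_prob s c x beta nu kappa).
Local Notation E := (cond_exp s c serv T w x beta nu kappa).
Local Notation dcl sg := (dcls s c x beta (nu sg) (kappa sg)).
Local Notation Pcl sg := (Pcls s c beta (nu sg) (kappa sg)).

Lemma agrees_assign (tp : {ffun L -> option S}) sg i (tau : {ffun L -> S}) :
  tp sg = None ->
  agrees (assign tp sg i) tau = agrees tp tau && (tau sg == i).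
Proof.
move=> tp_sg; apply/forallP/andP => [agr | [/forallP agr /eqP <-] sg'].
- split; last by have := agr sg; rewrite ffunE eqxx => /eqP [->].
  apply/forallP => sg'; have := agr sg'; rewrite ffunE.
  by case: (sg' =P sg) => [->|_] //=; rewrite tp_sg.
- by rewrite ffunE; case: (sg' =P sg) => [->|_]; rewrite ?eqxx ?orbT.
Qed.

Lemma cond_exp_unassigned (tp : {ffun L -> option S}) sg :
  tp sg = None -> E tp = \sum_i p sg i * E (assign tp sg i).
Proof.
move=> tp_sg; rewrite /cond_exp (partition_big (fun tau : {ffun L -> S} => tau sg) predT) //=.
apply: eq_bigr => i _; rewrite mulr_sumr.
rewrite [RHS](eq_bigl _ _ (fun tau => agrees_assign i tau tp_sg)).
apply: eq_bigr => tau /andP [_ /eqP tau_sg]; rewrite mulrA.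
congr (_ * _); rewrite (bigD1 sg) ?tp_sg //= tau_sg; congr (_ * _).
by apply: eq_bigl => sg'; rewrite ffunE; case: (sg' =P sg) => [->|_]; rewrite /= ?andbF ?andbT.
Qed.

Lemma cond_exp_le_assign (tp : {ffun L -> option S}) sg (P : {set S}) M :
  tp sg = None ->
  (forall i, 0 <= p sg i) -> (forall i, i \notin P -> p sg i = 0) ->
  \sum_i p sg i = 1 ->
  (forall i, i \in P -> E (assign tp sg i) <= M) ->
  E tp <= M.
Proof.
move=> tp_sg p_ge0 p_out p_sum1 le_M; rewrite (cond_exp_unassigned tp_sg).
rewrite -[M]mul1r -p_sum1 mulr_suml; apply: ler_sum => i _.
have [iP | iNP] := boolP (i \in P); first by rewrite ler_wpM2l ?le_M.
by rewrite p_out ?mul0r.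
Qed.

Lemma cond_exp_restrict_nil (psi : {ffun L -> S}) :
  E (restrict psi [::]) = exp_random s c serv T w x beta nu kappa.
Proof.
rewrite /cond_exp (eq_bigl predT) => [|tau]; last by apply/forallP => sg; rewrite ffunE.
by apply: eq_bigr => tau _; congr (_ * _); apply: eq_bigl => sg; rewrite ffunE.
Qed.

Lemma cond_exp_restrict_all (psi : {ffun L -> S}) (ord : seq L) :
  (forall sg, sg \in ord) -> E (restrict psi ord) = reward serv T w nu psi.
Proof.
move=> ord_all; rewrite /cond_exp (eq_bigl (pred1 psi)) => [|tau /=].
  by rewrite big_pred1_eq big_pred0 ?mul1r // => sg; rewrite ffunE ord_all.
apply/forallP/eqP => [agr | ->]; last by move=> sg; rewrite ffunE ord_all eqxx orbT.
by apply/ffunP => sg; have := agr sg; rewrite ffunE ord_all => /eqP [->].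
Qed.

Lemma assign_restrict (psi : {ffun L -> S}) pre sg :
  assign (restrict psi pre) sg (psi sg) = restrict psi (rcons pre sg).
Proof.
apply/ffunP => sg'; rewrite !ffunE mem_rcons in_cons.
by case: (sg' =P sg) => [->|_] //=; rewrite ffunE.
Qed.

Lemma slot_prob_ge0 sg i : (forall i j, 0 <= x i j) -> 0 <= p sg i.
Proof.
move=> x_ge0; rewrite /slot_prob; case: ifP => // _.
by rewrite divr_ge0 ?sumr_ge0.
Qed.

Lemma slot_prob_out sg i : i \notin Pcl sg -> p sg i = 0.
Proof. by rewrite /slot_prob => /negbTE ->. Qed.

Lemma sum_slot_prob sg : dcl sg != 0 -> \sum_i p sg i = 1.
Proof. by move=> dcl_neq0; rewrite -big_mkcond /= -mulr_suml mulfV. Qed.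

(* A slot of node j and class q exists only if n_j^q > 0, and n_j^q = 0 when
   d_j^q = 0. *)
Lemma valid_slots_dcls_neq0 sg :
  valid_slots s c x beta nu kappa -> dcl sg != 0.
Proof.
move=> [kappa_gt0 card_slots]; apply/eqP => dcl0.
have : (0 < #|[set sg' | (nu sg' == nu sg) && (kappa sg' == kappa sg)]|)%N.
  by apply/card_gt0P; exists sg; rewrite inE !eqxx.
by rewrite card_slots ?kappa_gt0 // /ncls dcl0 mulr0 ceil0; case: ifP.
Qed.

Section SA1.
Variables (ord : seq L) (psi : {ffun L -> S}).
Hypotheses (x_ge0 : forall i j, 0 <= x i j) (dcl_neq0 : forall sg, dcl sg != 0).
Hypotheses (ord_uniq : uniq ord)
  (psi_SA1 : SA1_output s c serv T w x beta nu kappa ord psi).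

Lemma SA1_cond_exp_step pre sg post : ord = pre ++ sg :: post ->
  E (restrict psi pre) <= E (restrict psi (rcons pre sg)).
Proof.
move=> ord_split; have [_ psi_max] := psi_SA1 ord_split.
rewrite -assign_restrict.
apply: (cond_exp_le_assign (sg := sg) _ _ (@slot_prob_out sg) _ psi_max).
- rewrite ffunE; case: ifP => // sg_pre.
  move: ord_uniq; rewrite ord_split cat_uniq => /and3P [_ /hasPn/(_ sg) sgNpre _].
  by move: sg_pre; rewrite (negbTE (sgNpre (mem_head _ _))).
- by move=> i; apply: slot_prob_ge0.
- exact: sum_slot_prob.
Qed.

Lemma SA1_cond_exp_mono pre post : ord = pre ++ post ->
  E (restrict psi pre) <= E (restrict psi ord).
Proof.
elim: post pre => [|sg post IH] pre ord_split; first by rewrite ord_split cats0.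
apply: le_trans (SA1_cond_exp_step ord_split) (IH _ _).
by rewrite cat_rcons.
Qed.

End SA1.
End ConditionalExpectation.

Theorem theorem6 (R : realType) (S V U : finType)
    (s : S -> R) (c : V -> R) (serv : U -> S) (T : U -> {set V}) (w : U -> R)
    (x : S -> V -> R) (y : U -> R) (beta : R)
    (L : finType) (nu : L -> V) (kappa : L -> nat)
    (ord : seq L) (psi : {ffun L -> S}) :
  (forall i, 0 < s i) ->
  (forall j, 0 < c j) ->
  (forall k, 0 < w k) ->
  LP_optimal s c serv T w x y ->
  beta < 1 ->
  (forall i j, s i <= beta * c j) ->
  valid_slots s c x beta nu kappa ->
  uniq ord -> (forall sg, sg \in ord) ->
  SA1_output s c serv T w x beta nu kappa ord psi ->
  exp_random s c serv T w x beta nu kappa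
    <= total_reward serv T w (placement nu psi).
Proof.
move=> _ _ _ [[[x_ge0 _ _ _] _] _] _ _ slots ord_uniq ord_all psi_SA1.
have dcl_neq0 sg := valid_slots_dcls_neq0 sg slots.
rewrite -(cond_exp_restrict_nil s c serv T w x beta nu kappa psi).
rewrite -[total_reward _ _ _ _](cond_exp_restrict_all s c serv T w x beta nu kappa psi ord_all).
exact: (SA1_cond_exp_mono x_ge0 dcl_neq0 ord_uniq psi_SA1 (pre := [::])).
Qed.
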